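(* Let $\Delta\in(0,1]$. There exist an MDP and a parameter space $\Theta=\{\theta_1,\theta_2\}$ with $D_{\mathrm{KL}}(p_{\theta_1}\|p_{\theta_2})<\infty$, $D_{\mathrm{KL}}(p_{\theta_2}\|p_{\theta_1})<\infty$ and $J(\theta_1)-J(\theta_2)=\Delta$ such that, for sufficiently large $n$, every algorithm for the online policy optimization problem suffers expected regret $\mathbb{E}R(n)\ge \frac{1}{32\Delta}$.
   Context: An MDP with state space $\mathcal S$, action space $\mathcal A$, transition kernel $P$, initial-state distribution $\mu$, reward function and horizon $H$ generates trajectories $\tau=(s_0,a_0,\dots,s_{H-1},a_{H-1})$ with return $\mathcal R(\tau)$. A parametric policy $\pi_\theta(\cdot|s)$, $\theta\in\Theta$, induces the trajectory distribution $p_\theta(\tau)=\mu(s_0)\prod_{h=0}^{H-1}\pi_\theta(a_h|s_h)P(s_{h+1}|s_h,a_h)$, and its expected return is $J(\theta)=\mathbb E_{\tau\sim p_\theta}[\mathcal R(\tau)]$. Online policy optimization (with mediator feedback): at each round $t=1,\dots,n$ the algorithm selects $\theta_t\in\Theta$ as a (possibly randomized) function of the history $\{(\theta_i,\tau_i,\mathcal R(\tau_i))\}_{i<t}$, executes $\pi_{\theta_t}$, and observes a trajectory $\tau_t\sim p_{\theta_t}$ and its return $\mathcal R(\tau_t)$. With $J^*=\sup_{\theta\in\Theta}J(\theta)$ and $\Delta(\theta)=J^*-J(\theta)$, the regret is $R(n)=\sum_{t=1}^n\Delta(\theta_t)$. $D_{\mathrm{KL}}$ denotes the Kullback–Leibler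 divergence. *)

From HB Require Import structures.
From mathcomp Require Import all_boot all_order all_algebra.
From mathcomp Require Import all_classical all_reals all_analysis.
Set Implicit Arguments. Unset Strict Implicit. Unset Printing Implicit Defensive.
Import Order.TTheory GRing.Theory Num.Theory.
Local Open Scope ring_scope.

Section MDP.
Variables (R : realType) (S A : finType) (H : nat).

Definition is_dist (T : finType) (p : T -> R) : Prop :=
  (forall x, 0 <= p x) /\ \sum_(x : T) p x = 1.

Record env := Env {
  mu  : S -> R;
  trP : S -> A -> S -> R;
  rew : S -> A -> R }.

Definition valid_env (E : env) : Prop :=
  is_dist (mu E) /\ (forall s a, is_dist (trP E s a)).

Definition theta1 : bool := true.
Definition theta2 : bool := false.

Definition valid_policy (pi : bool -> S -> A -> R) : Prop :=
  forall th s, is_dist (pi th s).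

Definition traj := (H.-tuple (S * A))%type.

Fixpoint trans_prod (E : env) (l : seq (S * A)) : R :=
  match l with
  | x :: ((y :: _) as l') => trP E x.1 x.2 y.1 * trans_prod E l'
  | _ => 1
  end.

Definition init_prob (E : env) (l : seq (S * A)) : R :=
  match l with x :: _ => mu E x.1 | [::] => 1 end.

(* p_theta(tau) = mu(s_0) prod_h pi_theta(a_h|s_h) P(s_{h+1}|s_h,a_h)
   (transitions out of the last step are marginalised out) *)
Definition ptraj (E : env) (pi : bool -> S -> A -> R) (th : bool) (tau : traj) : R :=
  init_prob E tau * (\prod_(x <- tau) pi th x.1 x.2) * trans_prod E tau.

Definition ret (E : env) (tau : traj) : R := \sum_(x <- tau) rew E x.1 x.2.

Definition J (E : env) pi (th : bool) : R :=
  \sum_(tau : traj) ptraj E pi th tau * ret E tau.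

Definition Jstar (E : env) pi : R := Num.max (J E pi theta1) (J E pi theta2).

Definition gap (E : env) pi (th : bool) : R := Jstar E pi - J E pi th.

Definition KL (p q : traj -> R) : \bar R :=
  (\sum_(tau : traj)
     (if p tau == 0%R then 0%E
      else if q tau == 0%R then +oo%E
      else (p tau * ln (p tau / q tau))%:E))%E.

Definition history := seq (bool * traj * R).

(* randomized algorithm: distribution of theta_t given the history *)
Definition algorithm := history -> bool -> R.

Definition valid_alg (alg : algorithm) : Prop := forall h, is_dist (alg h).

Fixpoint exp_regret_from (E : env) pi (alg : algorithm) (k : nat) (h : history) : R :=
  match k with
  | 0 => 0
  | k'.+1 =>
      \sum_(th : bool) alg h th *
        (gap E pi th +
         \sum_(tau : traj) ptraj E pi th tau *
            exp_regret_from E pi alg k' (rcons h (th, tau, ret E tau)))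
  end.

Definition exp_regret (E : env) pi (alg : algorithm) (n : nat) : R :=
  exp_regret_from E pi alg n [::].

End MDP.

(* Two environments share a rare state, reached with probability eps, in which
   action true earns c and action false earns -c; the sign of c is flipped
   between the environments, and the other state earns nothing.  Parameter th
   plays action th with probability 3/4, so each environment has a gap
   Delta = eps c between the two parameters, and every trajectory has positive
   probability under both parameters, whence finite KL divergences.  Whatever
   the algorithm plays, it pays Delta in one of the two environments, and it
   can tell them apart only after visiting the rare state: by induction on the
   horizon, the two expected regrets over n >= m rounds add up to at least
   Delta m (1 - m eps).  Taking m = N > Delta^-2 and eps = 1/(2N) makes this
   sum at least Delta N / 2 >= 1 / (2 Delta). *)

From HB Require Import structures.
From mathcomp Require Import all_boot all_order all_algebra.
From mathcomp Require Import all_classical all_reals all_analysis.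
From mathcomp Require Import ring lra.
Import Order.TTheory GRing.Theory Num.Theory.
Set Implicit Arguments. Unset Strict Implicit. Unset Printing Implicit Defensive.
Local Open Scope ring_scope.

Section Trajectories.
Variables (R : realType) (S A : finType) (H : nat).
Implicit Types (E : env R S A) (pi : bool -> S -> A -> R).

Lemma trans_prod_ge0 E (l : seq (S * A)) :
  valid_env E -> 0 <= trans_prod E l.
Proof.
case=> _ trP_dist; elim: l => [|x [|y l] IH] //=.
by apply: mulr_ge0 => //; case: (trP_dist x.1 x.2) => ->.
Qed.

Lemma ptraj_ge0 E pi th (tau : traj S A H) :
  valid_env E -> valid_policy pi -> 0 <= ptraj E pi th tau.
Proof.
move=> E_ok pi_ok; apply: mulr_ge0; last exact: trans_prod_ge0.
apply: mulr_ge0; last by apply: prodr_ge0 => x _; case: (pi_ok th x.1) => ->.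
by case: E_ok => -[mu_ge0 _] _; case: (tval tau) => [|x l] //=.
Qed.

Lemma gap_ge0 E pi th : 0 <= gap H E pi th.
Proof. by rewrite subr_ge0 /Jstar le_max; case: th; rewrite lexx ?orbT. Qed.

Lemma KL_lt_pinfty (p q : traj S A H -> R) :
  (forall tau, p tau != 0 -> q tau != 0) -> (KL p q < +oo)%E.
Proof.
move=> supp_pq; rewrite /KL.
rewrite (eq_bigr (fun tau => (if p tau == 0 then 0 else p tau * ln (p tau / q tau))%:E)).
  by rewrite sumEFin ltry.
by move=> tau _; case: eqP => [//|/eqP /supp_pq /negbTE ->].
Qed.

Lemma exp_regret_from_ge0 E pi (alg : algorithm R S A H) k h :
  valid_env E -> valid_policy pi -> valid_alg alg ->
  0 <= exp_regret_from E pi alg k h.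
Proof.
move=> E_ok pi_ok alg_ok; elim: k h => [|k IH] h //=.
apply: sumr_ge0 => th _; apply: mulr_ge0; first by case: (alg_ok h) => ->.
apply: addr_ge0; first exact: gap_ge0.
by apply: sumr_ge0 => tau _; apply: mulr_ge0; [exact: ptraj_ge0 | exact: IH].
Qed.

End Trajectories.

Lemma regret_bound_step (R : realFieldType) (Delta eps m : R) :
  0 <= Delta -> 0 <= eps -> 0 <= m ->
  Delta * (m + 1) * (1 - (m + 1) * eps) <=
  Delta + (1 - eps) * (Delta * m * (1 - m * eps)).
Proof.
move=> Delta_ge0 eps_ge0 m_ge0; rewrite -subr_ge0.
have -> : Delta + (1 - eps) * (Delta * m * (1 - m * eps)) -
          Delta * (m + 1) * (1 - (m + 1) * eps) =
          Delta * (m ^+ 2 * eps ^+ 2 + m * eps + eps) by ring.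
by apply: mulr_ge0 => //; rewrite !addr_ge0 // ?mulr_ge0 // exprn_ge0.
Qed.

Section TwoIndistinguishableEnvironments.
Variables (R : realType) (S A : finType) (H : nat).
Variables (E E' : env R S A) (pi : bool -> S -> A -> R) (alg : algorithm R S A H).
Hypotheses (E_ok : valid_env E) (E'_ok : valid_env E').
Hypotheses (pi_ok : valid_policy pi) (alg_ok : valid_alg alg).
Hypothesis ptrajE' :
  forall th (tau : traj S A H), ptraj E' pi th tau = ptraj E pi th tau.
Variables (Delta eps : R) (silent : pred (traj S A H)).
Hypotheses (Delta_ge0 : 0 <= Delta) (eps_ge0 : 0 <= eps).
Hypothesis gapDE' : forall th, gap H E pi th + gap H E' pi th = Delta.
Hypothesis ret_silent :
  forall tau : traj S A H, silent tau -> ret E tau = ret E' tau.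
Hypothesis prob_silent :
  forall th, \sum_(tau : traj S A H) ptraj E pi th tau * (silent tau)%:R = 1 - eps.

(* Each round costs gap E + gap E' = Delta in total, and a silent trajectory
   extends the history identically in both environments, so the induction
   hypothesis bounds the sum of the two continuation regrets. *)
Lemma exp_regret_from_sum_ge k h m : (m <= k)%N ->
  Delta * m%:R * (1 - m%:R * eps) <=
  exp_regret_from E pi alg k h + exp_regret_from E' pi alg k h.
Proof.
have regret_ge0 k' h1 h2 :
    0 <= exp_regret_from E pi alg k' h1 + exp_regret_from E' pi alg k' h2.
  by apply: addr_ge0; apply: exp_regret_from_ge0.
elim: k h m => [|k IH] h [|m] // m_le_k.
1,2: by rewrite mulr0 mul0r; apply: regret_ge0.
rewrite -natr1; apply: le_trans (regret_bound_step Delta_ge0 eps_ge0 (ler0n _ m)) _.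
set B := Delta * m%:R * _; have [alg_ge0 alg_sum1] := alg_ok h.
rewrite /= -big_split -[leLHS]mul1r -{1}alg_sum1 mulr_suml.
apply: ler_sum => th _ /=; rewrite -mulrDr; apply: ler_wpM2l; first exact: alg_ge0.
rewrite addrACA gapDE' lerD2l -(prob_silent th) mulr_suml -big_split.
apply: ler_sum => tau _ /=; rewrite ptrajE' -mulrA -mulrDr.
apply: ler_wpM2l; first exact: ptraj_ge0.
case silent_tau: (silent tau); last by rewrite mul0r; apply: regret_ge0.
by rewrite mul1r -(ret_silent silent_tau); apply: IH.
Qed.

End TwoIndistinguishableEnvironments.

Lemma sum_traj1 (V : nmodType) (S A : finType) (F : traj S A 1 -> V) :
  \sum_(tau : traj S A 1) F tau = \sum_(s : S) \sum_(a : A) F [tuple (s, a)].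
Proof.
rewrite pair_bigA (reindex (fun x : S * A => [tuple x])) /=.
  by apply: eq_bigr => -[].
exists (@thead 0 _) => // tau _.
by apply: val_inj; case: tau => -[|x []].
Qed.

Section HorizonOne.
Variables (R : realType) (S A : finType) (E : env R S A).

Lemma ptraj_horizon1 pi th (tau : traj S A 1) :
  ptraj E pi th tau = mu E (thead tau).1 * pi th (thead tau).1 (thead tau).2.
Proof. by case: tau => -[|x []] //= ?; rewrite /ptraj /= big_seq1 mulr1. Qed.

Lemma ret_horizon1 (tau : traj S A 1) : ret E tau = rew E (thead tau).1 (thead tau).2.
Proof. by case: tau => -[|x []] //= ?; rewrite /ret /= big_seq1. Qed.

End HorizonOne.

Section RareStateEnvironment.
Variables (R : realType) (eps : R).

Definition bias_policy (th s a : bool) : R := if a == th then 3/4 else 1/4.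

Definition coin (s : bool) : R := if s then eps else 1 - eps.

Definition signed_reward (c : R) (s a : bool) : R :=
  if s then (if a then c else - c) else 0.

Definition rare_state_env (c : R) : env R bool bool :=
  Env coin (fun _ _ => coin) (signed_reward c).

Lemma bias_policy_valid : valid_policy bias_policy.
Proof.
move=> th s; split; first by move=> a; rewrite /bias_policy; case: ifP => _; lra.
by rewrite big_bool /bias_policy; case: th => /=; lra.
Qed.

Hypotheses (eps_gt0 : 0 < eps) (eps_lt1 : eps < 1).

Lemma rare_state_env_valid c : valid_env (rare_state_env c).
Proof.
have coin_dist : is_dist coin.
  by split; [case; rewrite /= ?subr_ge0 ltW | rewrite big_bool /= addrC subrK].
by split=> //.
Qed.

Lemma ptraj_rare_state_env_gt0 c th (tau : traj bool bool 1) :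
  0 < ptraj (rare_state_env c) bias_policy th tau.
Proof.
rewrite ptraj_horizon1 /= /coin /bias_policy.
by apply: mulr_gt0; case: ifP => _; rewrite ?subr_gt0 //; lra.
Qed.

Lemma J_rare_state_env c th :
  J 1 (rare_state_env c) bias_policy th = if th then eps * c / 2 else - (eps * c / 2).
Proof.
rewrite /J sum_traj1 big_bool !big_bool.
rewrite !ptraj_horizon1 !ret_horizon1 /= /coin /bias_policy /signed_reward /=.
by case: th => /=; field.
Qed.

Lemma gap_rare_state_env_add c th : 0 <= c ->
  gap 1 (rare_state_env c) bias_policy th +
  gap 1 (rare_state_env (- c)) bias_policy th = eps * c.
Proof.
move=> c_ge0; have ec_ge0 := mulr_ge0 (ltW eps_gt0) c_ge0.
rewrite /gap /Jstar !J_rare_state_env /theta1 /theta2 /= mulrN mulNr opprK.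
by rewrite max_l ?max_r; [case: th; lra | lra | lra].
Qed.

Definition silent_traj (tau : traj bool bool 1) : bool := ~~ (thead tau).1.

Lemma ret_rare_state_env_silent c c' (tau : traj bool bool 1) : silent_traj tau ->
  ret (rare_state_env c) tau = ret (rare_state_env c') tau.
Proof. by rewrite /silent_traj !ret_horizon1 /=; case: (thead tau).1. Qed.

Lemma prob_rare_state_env_silent c th :
  \sum_(tau : traj bool bool 1)
    ptraj (rare_state_env c) bias_policy th tau * (silent_traj tau)%:R = 1 - eps.
Proof.
rewrite sum_traj1 big_bool !big_bool !ptraj_horizon1 /= /coin /bias_policy /silent_traj /=.
by case: th => /=; field.
Qed.

Lemma rare_state_env_regret_sum_ge c (alg : algorithm R bool bool 1) n m :
  0 <= c -> valid_alg alg -> (m <= n)%N ->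
  eps * c * m%:R * (1 - m%:R * eps) <=
  exp_regret (rare_state_env c) bias_policy alg n +
  exp_regret (rare_state_env (- c)) bias_policy alg n.
Proof.
move=> c_ge0 alg_ok.
apply: exp_regret_from_sum_ge => //.
- exact: rare_state_env_valid.
- exact: rare_state_env_valid.
- exact: bias_policy_valid.
- by move=> th tau; rewrite !ptraj_horizon1.
- exact: mulr_ge0 (ltW eps_gt0) c_ge0.
- exact: ltW.
- by move=> th; apply: gap_rare_state_env_add.
- by move=> tau; apply: ret_rare_state_env_silent.
- by move=> th; apply: prob_rare_state_env_silent.
Qed.

End RareStateEnvironment.

Lemma max_ge_half_add (R : realFieldType) (x a b : R) :
  x <= a + b -> x / 2 <= Num.max a b.
Proof.
by move=> x_le; rewrite le_max; case: (leP a b) => ?; apply/orP; [right | left]; lra.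
Qed.

Theorem theorem1 (R : realType) (Delta : R) :
  0 < Delta <= 1 ->
  exists (S A : finType) (H : nat) (pi : bool -> S -> A -> R) (E E' : env R S A),
    [/\ (0 < H)%N, valid_policy pi, valid_env E & valid_env E'] /\
    [/\ (KL (ptraj (H:=H) E pi theta1) (ptraj E pi theta2) < +oo)%E,
        (KL (ptraj (H:=H) E pi theta2) (ptraj E pi theta1) < +oo)%E,
        (KL (ptraj (H:=H) E' pi theta1) (ptraj E' pi theta2) < +oo)%E &
        (KL (ptraj (H:=H) E' pi theta2) (ptraj E' pi theta1) < +oo)%E] /\
    J H E pi theta1 - J H E pi theta2 = Delta /\
    J H E' pi theta2 - J H E' pi theta1 = Delta /\
    exists N : nat, forall n : nat, (N <= n)%N ->
      forall alg : algorithm R S A H, valid_alg alg ->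
        1 / (32 * Delta) <= Num.max (exp_regret E pi alg n) (exp_regret E' pi alg n).
Proof.
case/andP=> Delta_gt0 _.
pose N := (Num.truncn (Delta ^-2)).+1.
have N_gt : Delta ^-2 < N%:R by apply: truncnS_gt.
have N_ge1 : 1 <= N%:R :> R by rewrite ler1n.
pose eps : R := (2 * N%:R)^-1.
have eps_gt0 : 0 < eps by rewrite invr_gt0; lra.
have N_eps : N%:R * eps = 1 / 2 by rewrite /eps; field; lra.
have eps_lt1 : eps < 1 by nra.
pose c := Delta / eps.
have eps_c : eps * c = Delta by rewrite /c; field; lra.
have c_ge0 : 0 <= c by rewrite divr_ge0 ?ltW.
exists bool, bool, 1%N, (@bias_policy R), (rare_state_env eps c), (rare_state_env eps (- c)).
split; first by split; [| exact: bias_policy_valid | exact: rare_state_env_valid ..].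
split.
  by split; apply: KL_lt_pinfty => tau _; rewrite gt_eqF ?ptraj_rare_state_env_gt0.
rewrite !J_rare_state_env /theta1 /theta2 /= mulrN eps_c.
split; first by field.
split; first by field.
exists N => n N_le_n alg alg_ok.
have := rare_state_env_regret_sum_ge eps_gt0 eps_lt1 c_ge0 alg_ok N_le_n.
rewrite eps_c N_eps => /max_ge_half_add; apply: le_trans.
have : 1 <= Delta ^+ 2 * N%:R.
  by rewrite -ler_pdivrMl ?exprn_gt0 // mulr1 ltW.
rewrite ler_pdivrMr; nra.
Qed.
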